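(* Let $L$ be a Lie algebra over a field $F$ and $\tilde L=L\otimes_FE$. Let $\Omega$ be a finite family of pairwise commuting elements of $\tilde L$ such that every element of $\Omega$ lies in one of the subspaces $L\otimes e_\pi+\tilde Le_\pi$. Write $\operatorname{ad}^{[k]}(\Omega)=U_k(\operatorname{ad}(\Omega))$ and suppose $\operatorname{ad}^{[3]}(\Omega)=\operatorname{ad}^{[4]}(\Omega)=0$. Then for arbitrary $y_1,y_2\in\tilde L$, \[\operatorname{ad}(y_1\operatorname{ad}^{[2]}(\Omega))\operatorname{ad}(y_2\operatorname{ad}^{[2]}(\Omega))=\operatorname{ad}^{[2]}(\Omega)\operatorname{ad}(y_1)\operatorname{ad}(y_2)\operatorname{ad}^{[2]}(\Omega).\]
   Context: $E$ is the commutative associative $F$-algebra without unit generated by $e_1,e_2,\dots$ with relations $e_i^2=0$; its basis consists of $e_\pi=e_{i_1}\cdots e_{i_r}$ for nonempty finite $\pi=\{i_1<\dots<i_r\}$. $\tilde L=L\otimes_FE$ with $[x\otimes\alpha,y\otimes\beta]=[x,y]\otimes\alpha\beta$, and $\tilde Le_\pi$ denotes $L\otimes Ee_\pi$. $\operatorname{ad}(b):x\mapsto[x,b]$, operators act on the right ($x\,uv$ means apply $u$ then $v$). For a finite family $\Omega'$ of pairwise commuting operators, $U_k(\Omega')=\sum d_1\cdots d_k$ over all $k$-element subsets $\{d_1,\dots,d_k\}$ of $\Omega'$, and $\operatorname{ad}(\Omega)=\{\operatorname{ad}(b)\}_{b\in\Omega}$. *)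

From HB Require Import structures.
From mathcomp Require Import all_boot all_order all_algebra.
From mathcomp Require Import finmap.
Set Implicit Arguments.
Unset Strict Implicit.
Unset Printing Implicit Defensive.
Import GRing.Theory.
Local Open Scope ring_scope.


Definition lie_algebra (F : fieldType) (L : lmodType F) (br : L -> L -> L) : Prop :=
  [/\ (forall (a : F) (x y z : L), br (a *: x + y) z = a *: br x z + br y z),
      (forall (a : F) (x y z : L), br x (a *: y + z) = a *: br x y + br x z),
      (forall x : L, br x x = 0) &
      (forall x y z : L, br x (br y z) + br y (br z x) + br z (br x y) = 0)].

Section Grassmann.
Variables (F : fieldType) (L : lmodType F) (br : L -> L -> L).

(* An element  sum_pi x_pi (x) e_pi  of  L (x)_F E  is represented by its
   coefficient function pi |-> x_pi  (pi a finite set of indices). *)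
Definition tL := {fset nat} -> L.

(* membership in L~ = L (x) E : no coefficient at the empty set (E has no unit)
   and finitely many nonzero coefficients *)
Definition in_tL (x : tL) : Prop :=
  x fset0 = 0 /\
  exists s : {fset {fset nat}}, forall t, t \notin s -> x t = 0.

(* [x (x) e_p, y (x) e_q] = [x,y] (x) e_p e_q, with e_p e_q = e_(p \cup q) if p,q
   disjoint and 0 otherwise; so the coefficient at t collects all splittings
   t = p \cup (t \ p) with p, t \ p nonempty. *)
Definition tbr (x y : tL) : tL := fun t =>
  \sum_(p <- fpowerset t | (p != fset0) && (p != t)) br (x p) (y (t `\` p)%fset).

Definition ad (b : tL) : tL -> tL := fun x => tbr x b.

(* operators act on the right: product d1 d2 ... dk means apply d1 first *)
Definition opprod (ds : seq (tL -> tL)) : tL -> tL :=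
  foldl (fun f u => u \o f) id ds.

Definition Uk (n : nat) (D : 'I_n -> (tL -> tL)) (k : nat) : tL -> tL :=
  fun x t => \sum_(S : {set 'I_n} | #|S| == k) opprod [seq D i | i <- enum S] x t.

Definition adk (n : nat) (om : 'I_n -> tL) (k : nat) : tL -> tL :=
  Uk (fun i => ad (om i)) k.

(* x lies in L (x) e_pi + L~ e_pi : all its coefficients are supported on
   index sets containing pi *)
Definition in_Le_pi (pi : {fset nat}) (x : tL) : Prop :=
  forall t, ~~ (pi `<=` t)%fset -> x t = 0.

End Grassmann.

From HB Require Import structures.
From mathcomp Require Import all_boot all_order all_algebra.
From mathcomp Require Import finmap.
From mathcomp Require Import sesquilinear boolp functions.
Set Implicit Arguments.
Unset Strict Implicit.
Unset Printing Implicit Defensive.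
Import GRing.Theory.
Local Open Scope fset_scope.
Local Open Scope ring_scope.

(* The envelope L~ is a Lie algebra (the Jacobi identity holds coefficientwise), and
   the d_i = ad(omega_i) are pairwise commuting derivations of it.  Since e_pi^2 = 0,
   any two elements of L~e_pi bracket to zero, hence d_i g d_i = 0 for every operator g
   preserving L~e_pi.  Adding the members of Omega one at a time, this gives
   U_a U_b = C(a+b,a) U_(a+b) and the Leibniz rule
     [x, y U_k] = sum_j (-1)^j [x U_j, y] U_(k-j).
   When U_3 = U_4 = 0, its instances k = 2, 3, 4 read
     [x, y U_2] = [x, y] U_2 - [x U_1, y] U_1 + [x U_2, y],
     [x U_1, y] U_2 = [x U_2, y] U_1,    [x U_2, y] U_2 = 0,
   and expanding z ad(y1 U_2) ad(y2 U_2) with the first and simplifying with the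
   other two leaves exactly z U_2 ad(y1) ad(y2) U_2. *)

Section PowersetSums.
Context {K : choiceType} {V : nmodType}.
Implicit Types p q r s t : {fset K}.

Lemma fsetUDKl p q : [disjoint q & p] -> (p `|` q) `\` p = q.
Proof. by move=> dqp; rewrite fsetDUl fsetDv fset0U; apply/fsetDidPl. Qed.
Lemma fsetUDK p s : p `<=` s -> p `|` (s `\` p) = s.
Proof. by move=> ps; rewrite fsetUDl fsetDv fsetD0; apply/fsetUidPr. Qed.

Lemma big_fpowerset_compl r (G : {fset K} -> V) :
  \sum_(q <- fpowerset r) G q = \sum_(q <- fpowerset r) G (r `\` q).
Proof.
have inj : {in fpowerset r &, injective (fun q => r `\` q)}.
  by move=> a b; rewrite !fpowersetE => ha hb e; rewrite -(fsetDK ha) -(fsetDK hb) e.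
rewrite -(big_imfset _ imfset_key G inj) /=; apply: eq_fbigl => q.
apply/idP/imfsetP => [|[q' _ ->]]; rewrite fpowersetE ?fsubsetDl // => hq.
by exists (r `\` q); rewrite ?fsetDK // fpowersetE fsubsetDl.
Qed.

Lemma big_fpowerset_chain t (G : {fset K} -> {fset K} -> V) :
  \sum_(s <- fpowerset t) \sum_(p <- fpowerset s) G s p =
  \sum_(p <- fpowerset t) \sum_(q <- fpowerset (t `\` p)) G (p `|` q) p.
Proof.
rewrite [RHS](pair_big_dep_cond _ _ _ xpredT (fun _ => xpredT)) /=.
set splits := [fset _ | _ in _, _ in _].
rewrite (pair_big_dep_cond _ _ _ xpredT (fun _ => xpredT)) /=.
have inj : {in splits &, injective (fun w => (w.1 `|` w.2, w.1))}.
  move=> _ _ /imfset2P[p + [q + ->]] /imfset2P[p' + [q' + ->]].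
  rewrite !inE !andbT !fpowersetE => _ /fsubsetDP[_ dpq] _ /fsubsetDP[_ dpq'] [e ep].
  by subst p'; congr pair; rewrite -(fsetUDKl dpq) -(fsetUDKl dpq') e.
rewrite -(big_imfset _ imfset_key (fun w => G w.1 w.2) inj) /=.
apply: eq_fbigl => -[s p]; apply/imfset2P/imfsetP => /=.
  move=> [s' + [p' + [= -> ->]]]; rewrite !inE !andbT !fpowersetE => st ps.
  exists (p', s' `\` p'); last by rewrite /= fsetUDK.
  apply/imfset2P; exists p'; first by rewrite !inE andbT fpowersetE (fsubset_trans ps st).
  by exists (s' `\` p'); rewrite // !inE andbT fpowersetE fsetSD.
move=> [_ /imfset2P[p' + [q + ->]] [-> ->]].
rewrite !inE !andbT !fpowersetE => pt /fsubsetDP[qt _].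
exists (p' `|` q); first by rewrite !inE andbT fpowersetE fsubUset pt.
by exists p'; rewrite // !inE andbT fpowersetE fsubsetUl.
Qed.
End PowersetSums.

Section LiftMax.
Variable n : nat.
Local Notation lmax := (lift (@ord_max n)).
Implicit Types (S : {set 'I_n}) (A : {set 'I_n.+1}).

Lemma ord_max_notin_imset S : ord_max \notin lmax @: S.
Proof. by apply/imsetP => -[i _ /eqP]; rewrite (negbTE (neq_lift _ _)). Qed.

Lemma preimset_lift_max S : lmax @^-1: (lmax @: S) = S.
Proof. by apply/setP => i; rewrite inE mem_imset //; apply: lift_inj. Qed.

Lemma preimset_lift_max1 S : lmax @^-1: (ord_max |: lmax @: S) = S.
Proof.
apply/setP => i; rewrite !inE eq_sym (negbTE (neq_lift _ _)) mem_imset //.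
exact: lift_inj.
Qed.

Lemma imset_lift_maxK A : ord_max \notin A -> lmax @: (lmax @^-1: A) = A.
Proof.
move=> A0; apply/setP => j; case: (unliftP ord_max j) => [i ->|->].
  by rewrite mem_imset ?inE //; apply: lift_inj.
by rewrite (negbTE A0) (negbTE (ord_max_notin_imset _)).
Qed.

Lemma imset_lift_maxK1 A : ord_max \in A -> ord_max |: lmax @: (lmax @^-1: A) = A.
Proof.
move=> A0; apply/setP => j; case: (unliftP ord_max j) => [i ->|->]; last by rewrite A0 setU11.
by rewrite in_setU1 eq_sym (negbTE (neq_lift _ _)) mem_imset ?inE //; apply: lift_inj.
Qed.

Lemma enum_set_lift_max A : enum A =
  let s := map lmax (enum (lmax @^-1: A)) in if ord_max \in A then rcons s ord_max else s.
Proof.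
have enumE m (B : {set 'I_m}) : enum B = filter (mem B) (enum 'I_m) by rewrite enumT.
have enum_ordS : enum 'I_n.+1 = rcons (map lmax (enum 'I_n)) ord_max.
  by rewrite enum_ordSr; congr (rcons _ _); apply: eq_map => i; apply/val_inj/esym/lift_max.
rewrite [LHS]enumE enum_ordS filter_rcons filter_map [enum (_ @^-1: _)]enumE /=.
by rewrite (@eq_filter _ _ (mem (lmax @^-1: A))) // => i; rewrite /= inE.
Qed.

End LiftMax.

Section GrassmannEnvelope.
Variables (F : fieldType) (L : lmodType F) (br : L -> L -> L).
Hypothesis br_lie : lie_algebra br.

Let br_linearl y : linear (br^~ y). Proof. by case: br_lie => h _ _ _ a x z; apply: h. Qed.
Let br_linearr x : linear (br x). Proof. by case: br_lie => _ h _ _ a y z; apply: h. Qed.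
HB.instance Definition _ :=
  bilinear_isBilinear.Build F L L L *:%R *:%R br (br_linearl, br_linearr).

Lemma lie_anticomm x y : br x y = - br y x.
Proof.
case: br_lie => _ _ brxx _; apply/eqP; rewrite -addr_eq0.
by have := brxx (x + y); rewrite linearDl !linearDr /= !brxx add0r addr0 => ->.
Qed.

Lemma lie_jacobi x y z : br x (br y z) = br (br x y) z - br (br x z) y.
Proof.
case: br_lie => _ _ _ /(_ x y z) /eqP.
rewrite [br y (br z x)]lie_anticomm [br z x]lie_anticomm [br z (br x y)]lie_anticomm.
by rewrite linearNl /= opprK subr_eq0 => /eqP <-; rewrite addrK.
Qed.

Local Notation T := (tL L).
Implicit Types x y z u v w : T.

Lemma tbr_fset0 x y : tbr br x y fset0 = 0.
Proof. by rewrite /tbr big_mkcond fpowerset0 big_seq_fset1 eqxx. Qed.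

Let tbr_linearl y : linear (tbr br ^~ y).
Proof.
move=> a x z; apply/funext => t; rewrite -[RHS]/(a *: tbr br x y t + tbr br z y t).
by rewrite /tbr scaler_sumr -big_split; apply: eq_bigr => p _; apply: linearPl.
Qed.
Let tbr_linearr x : linear (tbr br x).
Proof.
move=> a y z; apply/funext => t; rewrite -[RHS]/(a *: tbr br x y t + tbr br x z t).
by rewrite /tbr scaler_sumr -big_split; apply: eq_bigr => p _; apply: linearPr.
Qed.
HB.instance Definition _ :=
  bilinear_isBilinear.Build F T T T *:%R *:%R (tbr br) (tbr_linearl, tbr_linearr).

Lemma tbrE x y t : x fset0 = 0 -> y fset0 = 0 ->
  tbr br x y t = \sum_(p <- fpowerset t) br (x p) (y (t `\` p)).
Proof.
move=> x0 y0; rewrite /tbr big_mkcond /=; apply: eq_bigr => p _.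
by case: eqP => [->|_]; case: eqP => [->|_]; rewrite ?x0 ?fsetDv ?y0 ?linear0l ?linear0r.
Qed.

Lemma tbr_jacobi x u v : x fset0 = 0 -> u fset0 = 0 -> v fset0 = 0 ->
  tbr br x (tbr br u v) = tbr br (tbr br x u) v - tbr br (tbr br x v) u.
Proof.
move=> x0 u0 v0; apply/funext => t.
rewrite -[RHS]/(tbr br (tbr br x u) v t - tbr br (tbr br x v) u t).
have nested_right : tbr br x (tbr br u v) t = \sum_(p <- fpowerset t)
    \sum_(q <- fpowerset (t `\` p)) br (x p) (br (u q) (v (t `\` p `\` q))).
  by rewrite tbrE ?tbr_fset0 //; apply: eq_bigr => p _; rewrite tbrE // linear_sumr.
have nested_left y w : y fset0 = 0 -> w fset0 = 0 ->
    tbr br (tbr br x y) w t = \sum_(p <- fpowerset t)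
      \sum_(q <- fpowerset (t `\` p)) br (br (x p) (y q)) (w (t `\` p `\` q)).
  move=> y0 w0; rewrite tbrE ?tbr_fset0 //.
  under eq_bigr do rewrite tbrE // linear_sumlz.
  rewrite big_fpowerset_chain; apply: eq_big_seq => p _.
  apply: eq_big_seq => q; rewrite fpowersetE => /fsubsetDP[_ dqp].
  by rewrite fsetUDKl // fsetDDl.
rewrite nested_right !nested_left // -sumrB; apply: eq_bigr => p _.
rewrite [X in _ = _ - X]big_fpowerset_compl -sumrB.
by apply: eq_big_seq => q; rewrite fpowersetE => qtp; rewrite fsetDK // lie_jacobi.
Qed.

Lemma tbr_ad w x y : w fset0 = 0 -> x fset0 = 0 -> y fset0 = 0 ->
  tbr br x (ad br w y) = ad br w (tbr br x y) - tbr br (ad br w x) y.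
Proof. by move=> w0 x0 y0; apply: tbr_jacobi. Qed.

Lemma in_tL0 : in_tL (0 : T).
Proof. by split=> //; exists fset0. Qed.

Lemma in_tLD x y : in_tL x -> in_tL y -> in_tL (x + y).
Proof.
move=> [x0 [sx sxP]] [y0 [sy syP]].
split; first by rewrite -[LHS]/(x fset0 + y fset0) x0 y0 addr0.
exists (sx `|` sy) => t; rewrite inE negb_or => /andP[/sxP xt0 /syP yt0].
by rewrite -[LHS]/(x t + y t) xt0 yt0 addr0.
Qed.

Lemma in_tL_tbr x y : in_tL x -> in_tL y -> in_tL (tbr br x y).
Proof.
move=> [_ [sx sxP]] [_ [sy syP]]; split; first exact: tbr_fset0.
exists [fset p `|` q | p in sx, q in sy] => t tN.
rewrite /tbr big1_seq // => p /andP[_]; rewrite fpowersetE => pt.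
have [px|/sxP->] := boolP (p \in sx); last by rewrite linear0l.
have [qy|/syP->] := boolP (t `\` p \in sy); last by rewrite linear0r.
by case/negP: tN; rewrite -(fsetUDK pt); apply/imfset2P; exists p => //; exists (t `\` p).
Qed.

Lemma in_Le_piD pi x y : in_Le_pi pi x -> in_Le_pi pi y -> in_Le_pi pi (x + y).
Proof. by move=> xP yP t tN; rewrite -[LHS]/(x t + y t) xP // yP // addr0. Qed.

Lemma in_Le_pi_tbrl pi x y : in_Le_pi pi x -> in_Le_pi pi (tbr br x y).
Proof.
move=> xP t tN; rewrite /tbr big1_seq // => p /andP[_]; rewrite fpowersetE => pt.
by rewrite xP ?linear0l //; apply: contra tN => /fsubset_trans; apply.
Qed.

Lemma in_Le_pi_tbrr pi x y : in_Le_pi pi y -> in_Le_pi pi (tbr br x y).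
Proof.
move=> yP t tN; rewrite /tbr big1_seq // => p _.
by rewrite yP ?linear0r //; apply: contra tN => /fsubset_trans; apply; apply: fsubsetDl.
Qed.

Lemma tbr_Le_pi_eq0 pi x y : pi != fset0 ->
  in_Le_pi pi x -> in_Le_pi pi y -> tbr br x y = 0.
Proof.
case/fset0Pn => i ipi xP yP; apply/funext => t; rewrite /tbr big1_seq // => p _.
have [pip|/xP->] := boolP (pi `<=` p); last by rewrite linear0l.
have [pitp|/yP->] := boolP (pi `<=` t `\` p); last by rewrite linear0r.
by have := fsubsetP pitp i ipi; rewrite inE (fsubsetP pip i ipi).
Qed.

Lemma ad_sandwich_eq0 pi w (f : T -> T) x : pi != fset0 -> in_Le_pi pi w ->
  (forall y, in_Le_pi pi y -> in_Le_pi pi (f y)) -> ad br w (f (ad br w x)) = 0.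
Proof. by move=> pi0 wP fP; apply: (tbr_Le_pi_eq0 pi0) => //; apply/fP/in_Le_pi_tbrr. Qed.

Lemma ad_comm u v x : u fset0 = 0 -> v fset0 = 0 -> x fset0 = 0 ->
  tbr br u v = 0 -> ad br v (ad br u x) = ad br u (ad br v x).
Proof.
move=> u0 v0 x0 uv0; apply/eqP; rewrite -subr_eq0 /ad -tbr_jacobi //.
by rewrite uv0 linear0r.
Qed.

Lemma opprod_cons (d : T -> T) ds x : opprod (d :: ds) x = opprod ds (d x).
Proof.
suff foldlE (f : T -> T) y : foldl (fun g e => e \o g) f ds y = opprod ds (f y) by apply: foldlE.
by elim: ds f y => //= e ds IH f y; rewrite [RHS]/opprod /= !IH.
Qed.

Lemma opprod_rcons (d : T -> T) ds x : opprod (rcons ds d) x = d (opprod ds x).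
Proof. by rewrite /opprod foldl_rcons. Qed.

Lemma adkE n (om : 'I_n -> T) k x : adk br om k x =
  \sum_(S : {set 'I_n} | #|S| == k) opprod [seq ad br (om i) | i <- enum S] x.
Proof. by apply/funext => t; apply/esym/(big_morph (fun f : T => f t)). Qed.

HB.instance Definition _ u := GRing.isLinear.Build F T T *:%R (ad br u) (tbr_linearl u).

Lemma adk_is_linear n (om : 'I_n -> T) k : linear (adk br om k).
Proof.
move=> a x y; rewrite !adkE scaler_sumr -big_split; apply: eq_bigr => S _ /=.
by elim: (enum S) x y => //= i s IH x y; rewrite !opprod_cons linearP IH.
Qed.
HB.instance Definition _ n (om : 'I_n -> T) k :=
  GRing.isLinear.Build F T T *:%R (adk br om k) (adk_is_linear om k).

Lemma adk0 n (om : 'I_n -> T) x : adk br om 0 x = x.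
Proof. by rewrite adkE (big_pred1 set0) ?enum_set0 // => S; rewrite /= cards_eq0. Qed.

Lemma adk_ord0 (om : 'I_0 -> T) k x : adk br om k.+1 x = 0.
Proof. by rewrite adkE big_pred0 // => S; rewrite (_ : S = set0) ?cards0 //; apply/setP => -[]. Qed.

Lemma adk_stable n (om : 'I_n -> T) (P : T -> Prop) :
    P 0 -> (forall x y, P x -> P y -> P (x + y)) ->
    (forall i x, P x -> P (ad br (om i) x)) ->
  forall k x, P x -> P (adk br om k x).
Proof.
move=> P0 PD Pad k x Px; rewrite adkE; elim/big_rec: _ => // S y _ Py.
by apply: PD Py; elim: (enum S) x Px => //= i s IH x Px; rewrite opprod_cons; apply/IH/Pad.
Qed.

Lemma adk_fset0 n (om : 'I_n -> T) k x : x fset0 = 0 -> adk br om k x fset0 = 0.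
Proof.
apply: (@adk_stable n om (fun y => y fset0 = 0)) => // [y z y0 z0|i y _].
  by rewrite -[LHS]/(y fset0 + z fset0) y0 z0 addr0.
exact: tbr_fset0.
Qed.

Lemma in_tL_adk n (om : 'I_n -> T) k x :
  (forall i, in_tL (om i)) -> in_tL x -> in_tL (adk br om k x).
Proof.
move=> om_in; apply: adk_stable => [|y z|i y yP];
  [exact: in_tL0 | exact: in_tLD | exact: in_tL_tbr].
Qed.

Lemma in_Le_pi_adk n (om : 'I_n -> T) pi k x :
  in_Le_pi pi x -> in_Le_pi pi (adk br om k x).
Proof. by apply: adk_stable => // [y z|i y]; [apply: in_Le_piD | apply: in_Le_pi_tbrl]. Qed.

Lemma adk_ad_comm n (om : 'I_n -> T) w k x :
    (forall i, om i fset0 = 0) -> w fset0 = 0 -> (forall i, tbr br w (om i) = 0) ->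
    x fset0 = 0 ->
  adk br om k (ad br w x) = ad br w (adk br om k x).
Proof.
move=> om0 w0 wom0 x0; rewrite !adkE raddf_sum; apply: eq_bigr => S _.
elim: (enum S) x x0 => //= i s IH x x0.
by rewrite !opprod_cons ad_comm // IH //; apply: tbr_fset0.
Qed.

Lemma adkS_lift_max n (om : 'I_n.+1 -> T) k x :
  adk br om k.+1 x = adk br (fun i => om (lift ord_max i)) k.+1 x
                     + ad br (om ord_max) (adk br (fun i => om (lift ord_max i)) k x).
Proof.
have lift_max_inj := @lift_inj _ (@ord_max n).
pose pre (A : {set 'I_n.+1}) := lift ord_max @^-1: A.
rewrite !adkE (bigID (fun S : {set 'I_n.+1} => ord_max \in S)) /= addrC raddf_sum.
congr (_ + _).
  rewrite (reindex_onto (fun S : {set 'I_n} => lift ord_max @: S) pre) /=.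
    apply: eq_big => [S|S _]; last first.
      rewrite enum_set_lift_max /= (negbTE (ord_max_notin_imset _)).
      by rewrite preimset_lift_max -map_comp.
    by rewrite /pre preimset_lift_max eqxx ord_max_notin_imset !andbT card_imset.
  by move=> A /andP[_ /imset_lift_maxK].
rewrite (reindex_onto (fun S : {set 'I_n} => ord_max |: lift ord_max @: S) pre) /=.
  apply: eq_big => [S|S _]; last first.
    by rewrite enum_set_lift_max /= setU11 preimset_lift_max1 map_rcons opprod_rcons -map_comp.
  by rewrite /pre preimset_lift_max1 eqxx setU11 !andbT cardsU1 ord_max_notin_imset card_imset.
by move=> A /andP[_ /imset_lift_maxK1].
Qed.

Lemma adk_lift_max n (om : 'I_n.+1 -> T) k x :
  adk br om k x =
    adk br (fun i => om (lift ord_max i)) k x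
    + ad br (om ord_max) (adk br (fun i => om (lift ord_max i)) k.-1 x) *+ (0 < k).
Proof. by case: k => [|k]; rewrite ?adk0 ?addr0 // adkS_lift_max. Qed.

Definition admissible_family n (om : 'I_n -> T) :=
  [/\ forall i, om i fset0 = 0, forall i j, tbr br (om i) (om j) = 0
    & forall i, exists2 pi, pi != fset0 & in_Le_pi pi (om i)].

Section LastMember.
Variables (n : nat) (om : 'I_n.+1 -> T).
Hypothesis omP : admissible_family om.
Local Notation om' := (fun i => om (lift ord_max i)).
Local Notation w := (om ord_max).

Lemma admissible_family_lift : admissible_family om'.
Proof.
by case: omP => om0 om_comm om_nil; split=> *; [apply: om0 | apply: om_comm | apply: om_nil].
Qed.

Lemma adk_lift_ad_last m z : z fset0 = 0 ->
  adk br om' m (ad br w z) = ad br w (adk br om' m z).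
Proof. by case: omP => om0 om_comm _; apply: adk_ad_comm. Qed.

Lemma ad_last_sandwich (f : T -> T) z :
  (forall pi y, in_Le_pi pi y -> in_Le_pi pi (f y)) -> ad br w (f (ad br w z)) = 0.
Proof.
case: omP => _ _ /(_ ord_max)[pi pi0 wP] fP.
by apply: (ad_sandwich_eq0 _ pi0 wP); apply: fP.
Qed.

End LastMember.

Lemma adk_comp n (om : 'I_n -> T) a b x : admissible_family om -> x fset0 = 0 ->
  adk br om b (adk br om a x) = adk br om (a + b) x *+ 'C(a + b, a).
Proof.
elim: n om a b x => [|n IHn] om [|a] [|b] x omP x0;
  rewrite ?adk0 ?addn0 ?binn ?bin0 ?mulr1n //; first by rewrite addSn !adk_ord0 mul0rn.
have om'P := admissible_family_lift omP.
rewrite [adk br om a.+1 x]adkS_lift_max raddfD /= addSn addnS !adkS_lift_max.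
rewrite (ad_last_sandwich omP (f := adk br _ b)) ?addr0 //; last by move=> *; apply: in_Le_pi_adk.
rewrite adk_lift_ad_last ?adk_fset0 // !IHn // !addSn !addnS.
by rewrite !raddfMn /= -addrA -mulrnDr -binS mulrnDl.
Qed.

Lemma tbr_adk n (om : 'I_n -> T) k x y :
    admissible_family om -> x fset0 = 0 -> y fset0 = 0 ->
  tbr br x (adk br om k y) =
  \sum_(j < k.+1) (-1) ^+ j *: adk br om (k - j) (tbr br (adk br om j x) y).
Proof.
elim: n om k x y => [|n IHn] om [|k] x y omP x0 y0;
  try by rewrite big_ord1 !adk0 expr0 scale1r.
  rewrite adk_ord0 linear0r big_ord_recl subn0 adk_ord0 scaler0 add0r big1 // => j _.
  by rewrite adk_ord0 linear0l raddf0 scaler0.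
have om'P := admissible_family_lift omP.
set om' := fun i => om (lift ord_max i) in om'P *; set w := om ord_max.
have termE j m : adk br om m (tbr br (adk br om j x) y) =
    adk br om' m (tbr br (adk br om' j x) y)
    + ad br w (adk br om' m.-1 (tbr br (adk br om' j x) y)) *+ (0 < m)
    + adk br om' m (tbr br (ad br w (adk br om' j.-1 x)) y) *+ (0 < j).
  rewrite (adk_lift_max om j x) (adk_lift_max om m) -/om' -/w linearDl linearMnl /=.
  rewrite !raddfD !raddfMn /= (ad_last_sandwich omP (f := fun z => adk br _ _ (tbr br z y))).
    by rewrite mul0rn addr0 addrAC.
  by move=> pi z zP; apply/in_Le_pi_adk/in_Le_pi_tbrl.
have w0 : w fset0 = 0 by case: omP => om0 _ _; apply: om0.
rewrite adkS_lift_max -/om' -/w linearDr /= tbr_ad ?adk_fset0 // !IHn ?tbr_fset0 //.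
under eq_bigr => j _ do rewrite termE !scalerDr.
rewrite !big_split /= addrA; congr (_ + _ + _).
  rewrite [RHS]big_ord_recr /= subnn mulr0n scaler0 addr0 raddf_sum; apply: eq_bigr => j _.
  by rewrite (subSn (leq_ord j)) raddfZsign.
rewrite [RHS]big_ord_recl /= mulr0n scaler0 add0r -sumrN; apply: eq_bigr => j _.
rewrite /bump leq0n add1n add0n subSS exprS mulN1r scaleNr adk_lift_ad_last //.
exact: tbr_fset0.
Qed.

Section SecondOrder.
Variables (n : nat) (om : 'I_n -> T).
Hypothesis omP : admissible_family om.
Local Notation U := (adk br om).

Lemma tbr_adk2 x y : x fset0 = 0 -> y fset0 = 0 ->
  tbr br x (U 2 y) = U 2 (tbr br x y) - U 1 (tbr br (U 1 x) y) + tbr br (U 2 x) y.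
Proof.
move=> x0 y0; rewrite tbr_adk // !big_ord_recr big_ord0 /= subnE /= !adk0 add0r.
by rewrite expr0 expr1 sqrrN expr1n !scale1r scaleN1r.
Qed.

Hypothesis om_in : forall i, in_tL (om i).
Hypothesis adk3 : forall z, in_tL z -> U 3 z = 0.
Hypothesis adk4 : forall z, in_tL z -> U 4 z = 0.

Let fset0_tL z : in_tL z -> z fset0 = 0. Proof. by case. Qed.
Let in_U k z : in_tL z -> in_tL (U k z). Proof. exact: in_tL_adk. Qed.

Lemma adk2_tbr_adk1 x y : in_tL x -> in_tL y ->
  U 2 (tbr br (U 1 x) y) = U 1 (tbr br (U 2 x) y).
Proof.
move=> xP yP; have xyP := in_tL_tbr xP yP.
have := tbr_adk 3 omP (fset0_tL xP) (fset0_tL yP).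
rewrite !big_ord_recr big_ord0 /= subnE /= !adk0 add0r !adk3 //.
rewrite linear0r linear0l !scaler0 addr0 add0r expr1 scaleN1r sqrrN expr1n scale1r.
by move/esym/eqP; rewrite addrC subr_eq0 => /eqP ->.
Qed.

Lemma adk2_tbr_adk2 x y : in_tL x -> in_tL y -> U 2 (tbr br (U 2 x) y) = 0.
Proof.
move=> xP yP; have xyP := in_tL_tbr xP yP; have x1yP := in_tL_tbr (in_U 1 xP) yP.
have := tbr_adk 4 omP (fset0_tL xP) (fset0_tL yP).
rewrite !big_ord_recr big_ord0 /= subnE /= !adk0 add0r !adk3 // !adk4 //.
by rewrite linear0r !linear0l !raddf0 !addr0 add0r sqrrN expr1n scale1r => ->.
Qed.

Lemma ad_adk2_ad_adk2 y1 y2 z : in_tL y1 -> in_tL y2 -> in_tL z ->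
  ad br (U 2 y2) (ad br (U 2 y1) z) = U 2 (ad br y2 (ad br y1 (U 2 z))).
Proof.
move=> y1P y2P zP; rewrite /ad.
have zy1P := in_tL_tbr zP y1P; have z1y1P := in_tL_tbr (in_U 1 zP) y1P.
have wE := tbr_adk2 (fset0_tL zP) (fset0_tL y1P).
set w := tbr br z (U 2 y1) in wE *.
have Uw1 : U 1 w = - U 1 (tbr br (U 2 z) y1).
  rewrite wE !raddfD raddfN /= !adk_comp ?tbr_fset0 //= adk3 //.
  by rewrite adk2_tbr_adk1 // mul0rn sub0r mulr2n opprD addrNK.
have Uw2 : U 2 w = 0.
  rewrite wE !raddfD raddfN /= !adk_comp ?tbr_fset0 //= adk4 // adk3 //.
  by rewrite adk2_tbr_adk2 // !mul0rn subrr add0r.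
rewrite (tbr_adk2 (tbr_fset0 z _ : w fset0 = 0) (fset0_tL y2P)) Uw1 Uw2.
rewrite linear0l addr0 linearNl raddfN opprK /=.
rewrite wE !linearDl linearNl !raddfD raddfN /= adk2_tbr_adk2 // !adk2_tbr_adk1 //.
by rewrite sub0r addrAC addNr add0r.
Qed.

End SecondOrder.

End GrassmannEnvelope.

Theorem lemma14 (F : fieldType) (L : lmodType F) (br : L -> L -> L)
  (n : nat) (om : 'I_n -> tL L) :
  lie_algebra br ->
  (forall i, in_tL (om i)) ->
  (forall i j, tbr br (om i) (om j) = (fun _ => 0)) ->
  (forall i, exists pi : {fset nat}, pi != fset0 /\ in_Le_pi pi (om i)) ->
  (forall z, in_tL z -> adk br om 3 z = (fun _ => 0)) ->
  (forall z, in_tL z -> adk br om 4 z = (fun _ => 0)) ->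
  forall y1 y2 : tL L, in_tL y1 -> in_tL y2 ->
  forall z : tL L, in_tL z ->
    ad br (adk br om 2 y2) (ad br (adk br om 2 y1) z) =
    adk br om 2 (ad br y2 (ad br y1 (adk br om 2 z))).
Proof.
move=> br_lie om_in om_comm om_nil adk3 adk4 y1 y2 y1P y2P z zP.
have omP : admissible_family br om.
  split=> [i | // | i]; first by case: (om_in i).
  by have [pi [pi0 piP]] := om_nil i; exists pi.
exact: ad_adk2_ad_adk2.
Qed.
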